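(* Let $\Gamma$ be an extended Dynkin graph with standard integral Cartan matrix and $v\in\mathbb{R}^I$ a configuration. Suppose there are two ways, beginning with $v$, of successively firing vertices of amplitude $<-1$ until no vertex of amplitude $<-1$ is left. Then these two firing sequences have the same length and terminate at the same configuration.
   Context: $\Gamma$ is an extended Dynkin graph with vertex set $I$ and standard integral generalized Cartan matrix $C=(c_{ij})$. Firing vertex $i$ replaces $v\in\mathbb{R}^I$ by $f_i(v)$, where $f_i(v)_i=-v_i$, $f_i(v)_j=v_j-c_{ij}v_i$ if $j$ is adjacent to $i$, and $f_i(v)_j=v_j$ otherwise; ''firing a vertex of amplitude $<-1$'' means firing $i$ when $v_i<-1$. *)

From mathcomp Require Import all_boot all_order all_algebra.
From mathcomp Require Import reals.
Set Implicit Arguments. Unset Strict Implicit. Unset Printing Implicit Defensive.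
Import Order.TTheory GRing.Theory Num.Theory.
Local Open Scope ring_scope.

Definition is_GCM (n : nat) (C : 'M[int]_n) : Prop :=
  (forall i, C i i = 2) /\
  (forall i j, i != j -> C i j <= 0) /\
  (forall i j, (C i j == 0) = (C j i == 0)).

Definition indecomposable (n : nat) (C : 'M[int]_n) : Prop :=
  forall J : {set 'I_n}, J != set0 -> J != setT ->
    exists j k, [/\ j \in J, k \notin J & C j k != 0].

(* Affine (= extended Dynkin) type, following Kac, Thm 4.3: an indecomposable
   GCM admitting a null vector with all coordinates positive. *)
Definition extended_dynkin (R : realType) (n : nat) (C : 'M[int]_n) : Prop :=
  [/\ is_GCM C, indecomposable C &
      exists u : 'I_n -> R, (forall i, 0 < u i) /\
        (forall i, \sum_(j < n) (C i j)%:~R * u j = 0)].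

Definition adjacent (n : nat) (C : 'M[int]_n) (i j : 'I_n) : bool :=
  (i != j) && (C i j != 0).

Definition fire (R : realType) (n : nat) (C : 'M[int]_n) (i : 'I_n)
    (v : 'I_n -> R) : 'I_n -> R :=
  fun j => if j == i then - v i
           else if adjacent C i j then v j - (C i j)%:~R * v i
           else v j.

Definition run (R : realType) (n : nat) (C : 'M[int]_n) (v : 'I_n -> R)
    (s : seq 'I_n) : 'I_n -> R :=
  foldl (fun w i => fire C i w) v s.

Fixpoint legal_seq (R : realType) (n : nat) (C : 'M[int]_n) (v : 'I_n -> R)
    (s : seq 'I_n) : Prop :=
  match s with
  | [::] => True
  | i :: s' => v i < -1 /\ legal_seq C (fire C i v) s'
  end.

Definition terminal (R : realType) (n : nat) (v : 'I_n -> R) : Prop :=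
  forall i, -1 <= v i.

(* If i <> j both have amplitude < -1, firing along the alternating words
   i j i ... and j i j ... of length m_ij = 2, 3, 4, 6 (according as
   c_ij c_ji = 0, 1, 2, 3) is legal from both sides and reaches the same
   configuration: this is the braid relation of the reflections s_i, s_j.
   The positive null vector u of C forces c_ij c_ji <= 4, and when
   c_ij c_ji = 4 the pair {i, j} is cut off from the other vertices, so
   u_i v_i + u_j v_j is invariant under firing; it starts below
   -(u_i + u_j), hence no terminal configuration is ever reached.
   This local confluence with equal lengths yields global uniqueness by
   induction on the length of one terminating sequence, as in Newman's
   lemma. *)

From mathcomp Require Import all_boot all_order all_algebra.
From mathcomp Require Import reals ring lra zify.
From Stdlib Require Import FunctionalExtensionality.
Set Implicit Arguments. Unset Strict Implicit. Unset Printing Implicit Defensive.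
Import Order.TTheory GRing.Theory Num.Theory.
Local Open Scope ring_scope.

Section Firing.
Variables (R : realType) (n : nat) (C : 'M[int]_n).

Definition terminates (v : 'I_n -> R) :=
  exists2 s, legal_seq C v s & terminal (run C v s).

Lemma run_cat (v : 'I_n -> R) s t : run C v (s ++ t) = run C (run C v s) t.
Proof. exact: foldl_cat. Qed.

Lemma legal_seq_cat (v : 'I_n -> R) s t :
  legal_seq C v (s ++ t) <-> legal_seq C v s /\ legal_seq C (run C v s) t.
Proof.
elim: s v => [|i s IHs] v /=; first by split=> // [[]].
by rewrite IHs; split=> [[? []]|[[? ?] ?]].
Qed.

Lemma terminates_of_bounded M (w : 'I_n -> R) :
  (forall t, legal_seq C w t -> (size t <= M)%N) -> terminates w.
Proof.
elim: M w => [|M IHM] w bound;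
  (have [/forallP Tw|/forallPn [i]] := boolP [forall i, -1 <= w i];
     first by exists [::]); rewrite -ltNge => wi.
  by have := bound [:: i] (conj wi I).
have [t Lt Tt] := IHM (fire C i w) (fun t Lt => bound (i :: t) (conj wi Lt)).
by exists (i :: t).
Qed.

Fixpoint alt (i j : 'I_n) (m : nat) : seq 'I_n :=
  if m is m'.+1 then i :: alt j i m' else [::].

Lemma size_alt i j m : size (alt i j m) = m.
Proof. by elim: m i j => //= m IHm i j; rewrite IHm. Qed.

Section Confluence.
Hypothesis local_confluence : forall (v : 'I_n -> R) i j,
  i != j -> v i < -1 -> v j < -1 -> terminates v ->
  exists p q, [/\ legal_seq C v (i :: p), legal_seq C v (j :: q),
                  size p = size q & run C v (i :: p) = run C v (j :: q)].

Lemma legal_seq_terminal_unique (v : 'I_n -> R) s1 s2 :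
  legal_seq C v s1 -> terminal (run C v s1) -> legal_seq C v s2 ->
  (size s2 <= size s1)%N /\
  (terminal (run C v s2) -> size s2 = size s1 /\ run C v s2 = run C v s1).
Proof.
move Es1: (size s1) => N.
elim: N v s1 s2 Es1 => [|N IHN] v [|i s1] [|j s2] //= Es1 L1 T1 L2.
- by case: L2 => vj _; exfalso; have := T1 j; lra.
- by split=> // T2; case: L1 => vi _; exfalso; have := T2 i; lra.
case: Es1 => Es1; case: L1 => vi L1; case: L2 => vj L2.
have IHi := IHN _ _ _ Es1 L1 T1.
have [eij|ij] := eqVneq i j.
  subst j; have [le_s2 eq_s2] := IHi _ L2; split=> // T2.
  by have [-> ->] := eq_s2 T2.
have [p [q [[_ Lp] [_ Lq] Epq /= Erun]]] :=
  local_confluence ij vi vj (ex_intro2 _ _ (i :: s1) (conj vi L1) T1).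
have [t Lt Tt] : terminates (run C (fire C i v) p).
  apply: (@terminates_of_bounded (N - size p)) => t Lt.
  have [+ _] := IHi _ (proj2 (legal_seq_cat _ _ _) (conj Lp Lt)).
  by rewrite size_cat => le_pt; rewrite leq_subRL // (leq_trans (leq_addr _ _) le_pt).
have Lpt : legal_seq C (fire C i v) (p ++ t) by apply/legal_seq_cat.
have Tpt : terminal (run C (fire C i v) (p ++ t)) by rewrite run_cat.
have [Spt Ept] := (IHi _ Lpt).2 Tpt.
have Lqt : legal_seq C (fire C j v) (q ++ t) by apply/legal_seq_cat; rewrite -Erun.
have Sqt : size (q ++ t) = N by rewrite size_cat -Epq -size_cat Spt.
have Tqt : terminal (run C (fire C j v) (q ++ t)) by rewrite run_cat -Erun.
have [le_s2 eq_s2] := IHN _ _ _ Sqt Lqt Tqt L2; split=> // T2.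
by have [-> ->] := eq_s2 T2; rewrite !run_cat -Erun -run_cat Ept.
Qed.
End Confluence.

Section Cartan.
Hypothesis hG : is_GCM C.

Lemma fireE i (v : 'I_n -> R) k : fire C i v k = v k - (C i k)%:~R * v i.
Proof.
have [Cii _] := hG; rewrite /fire /adjacent.
have [->|ki] := eqVneq k i; first by rewrite Cii; lra.
by case: eqP => [->|]; rewrite ?mulr0z ?mul0r ?subr0.
Qed.

Lemma intr_cartan_offdiag k l : k != l -> (C k l)%:~R = - (`|C k l|%N)%:R :> R.
Proof.
have [_ [Cle0 _]] := hG; move=> kl.
by rewrite -[C k l in LHS]opprK -(lez0_abs (Cle0 _ _ kl)) intrN.
Qed.

Lemma fire_weighted_sum (J : {set 'I_n}) (u : 'I_n -> R) :
  (forall k, \sum_(l in J) (C k l)%:~R * u l = 0) ->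
  forall k v, \sum_(l in J) u l * fire C k v l = \sum_(l in J) u l * v l.
Proof.
move=> Ju0 k v; under eq_bigr do rewrite fireE mulrBr mulrCA mulrA.
by rewrite sumrB -mulr_suml Ju0 mul0r subr0.
Qed.

Lemma run_weighted_sum (J : {set 'I_n}) (u : 'I_n -> R) :
  (forall k, \sum_(l in J) (C k l)%:~R * u l = 0) ->
  forall s v, \sum_(l in J) u l * run C v s l = \sum_(l in J) u l * v l.
Proof.
by move=> Ju0; elim=> [|k s IHs] v //=; rewrite IHs fire_weighted_sum.
Qed.

Lemma terminates_weighted_sum_ge (J : {set 'I_n}) (u : 'I_n -> R) v :
  (forall k, \sum_(l in J) (C k l)%:~R * u l = 0) -> (forall l, 0 <= u l) ->
  terminates v -> - \sum_(l in J) u l <= \sum_(l in J) u l * v l.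
Proof.
move=> Ju0 u_ge0 [s _ Ts]; rewrite -(run_weighted_sum Ju0 s) -sumrN.
by apply: ler_sum => l _; rewrite -mulrN1 ler_wpM2l.
Qed.

Lemma legal_braid (v : 'I_n -> R) i j :
  v i < -1 -> v j < -1 -> (`|C i j| * `|C j i| < 4)%N ->
  exists m, [/\ legal_seq C v (alt i j m.+1), legal_seq C v (alt j i m.+1)
              & run C v (alt i j m.+1) = run C v (alt j i m.+1)].
Proof.
move=> vi vj; have [Cii [_ Csym]] := hG.
have [->|ij] := eqVneq i j; first by rewrite Cii.
have Rii : (C i i)%:~R = 2 :> R by rewrite Cii.
have Rjj : (C j j)%:~R = 2 :> R by rewrite Cii.
have ji : j != i by rewrite eq_sym.
move: (intr_cartan_offdiag ij) (intr_cartan_offdiag ji) (Csym i j).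
rewrite -!absz_eq0.
move: (absz (C i j)) (absz (C j i)) => a b Rij Rji ab0 ab4.
have [a4 b4] : (a < 4 /\ b < 4)%N by lia.
case: a b a4 b4 ab0 ab4 Rij Rji => [|[|[|[|//]]]] [|[|[|[|//]]]] //= _ _ _ _ Rij Rji.
all: [> exists 1 | exists 2 | exists 3 | exists 5 | exists 3 | exists 5].
all: split; last by apply: functional_extensionality => k;
  rewrite /run /= !fireE ?Rii ?Rjj ?Rij ?Rji; ring.
all: by rewrite /= !fireE ?Rii ?Rjj ?Rij ?Rji; repeat split; lra.
Qed.

Section NullVector.
Variable u : 'I_n -> R.
Hypotheses (u_gt0 : forall i, 0 < u i)
  (Cu0 : forall i, \sum_(j < n) (C i j)%:~R * u j = 0).

Let off_row i j := \sum_(k | (k != i) && (k != j)) (C i k)%:~R * u k.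

Lemma null_row_split i j : i != j ->
  2 * u i - (`|C i j|%N)%:R * u j + off_row i j = 0.
Proof.
have [Cii _] := hG; move=> ij.
rewrite -(Cu0 i) (bigD1 i) //= (bigD1 j) 1?eq_sym //= addrA Cii.
by rewrite intr_cartan_offdiag // mulNr.
Qed.

Lemma off_row_le0 i j : off_row i j <= 0.
Proof.
have [_ [Cle0 _]] := hG; apply: sumr_le0 => k /andP [ki _].
by rewrite pmulr_lle0 // lerz0 Cle0 // eq_sym.
Qed.

Lemma null_row_bound i j : i != j -> (`|C i j|%N)%:R * u j <= 2 * u i.
Proof. by move=> ij; have := null_row_split ij; have := off_row_le0 i j; lra. Qed.

Lemma null_row_eq i j k : i != j -> (`|C i j|%N)%:R * u j = 2 * u i ->
  k != i -> k != j -> C i k = 0.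
Proof.
move=> ij Ceq ki kj; have [_ [Cle0 _]] := hG.
have off0 : \sum_(l | (l != i) && (l != j)) - ((C i l)%:~R * u l) = 0.
  by rewrite sumrN; have := null_row_split ij; rewrite /off_row; lra.
have /psumr_eq0P/(_ off0 k) :
    forall l, (l != i) && (l != j) -> 0 <= - ((C i l)%:~R * u l).
  by move=> l /andP [li _]; rewrite oppr_ge0 pmulr_lle0 // lerz0 Cle0 // eq_sym.
rewrite ki kj => /(_ isT)/eqP; rewrite oppr_eq0 mulf_eq0 (gt_eqF (u_gt0 k)) orbF.
by rewrite intr_eq0 => /eqP.
Qed.

Lemma cartan_pair_le4 i j : i != j -> (`|C i j| * `|C j i| <= 4)%N.
Proof.
move=> ij; have ji : j != i by rewrite eq_sym.
have := null_row_bound ij; have := null_row_bound ji.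
have := u_gt0 i; have := u_gt0 j; rewrite -(ler_nat R) natrM.
move: (`|C i j|%N%:R) (`|C j i|%N%:R) (ler0n R `|C i j|) (ler0n R `|C j i|).
by move=> a b; nra.
Qed.

Lemma cartan_pair_eq4 i j : i != j -> (`|C i j| * `|C j i| = 4)%N ->
  (`|C i j|%N)%:R * u j = 2 * u i.
Proof.
move=> ij /(congr1 (GRing.natmul (1 : R))); rewrite natrM.
have ji : j != i by rewrite eq_sym.
have := null_row_bound ij; have := null_row_bound ji.
have := u_gt0 i; have := u_gt0 j.
move: (`|C i j|%N%:R) (`|C j i|%N%:R) (ler0n R `|C i j|) (ler0n R `|C j i|).
by move=> a b; nra.
Qed.

Lemma affine_pair_not_terminates (v : 'I_n -> R) i j :
  i != j -> (`|C i j| * `|C j i| = 4)%N -> v i < -1 -> v j < -1 ->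
  ~ terminates v.
Proof.
move=> ij ab4 vi vj term; have ji : j != i by rewrite eq_sym.
have eqi := cartan_pair_eq4 ij ab4.
have eqj := cartan_pair_eq4 ji (etrans (mulnC _ _) ab4).
have [Cii [_ Csym]] := hG.
have sum2 (F : 'I_n -> R) : \sum_(l in [set i; j]) F l = F i + F j.
  by rewrite big_setU1 ?big_set1 // inE.
have J0 k : \sum_(l in [set i; j]) (C k l)%:~R * u l = 0.
  rewrite sum2; have [->|ki] := eqVneq k i.
    by rewrite Cii intr_cartan_offdiag //; lra.
  have [->|kj] := eqVneq k j.
    by rewrite Cii intr_cartan_offdiag //; lra.
  have Cki : C k i = 0 by apply/eqP; rewrite Csym (null_row_eq ij eqi ki kj).
  have Ckj : C k j = 0 by apply/eqP; rewrite Csym (null_row_eq ji eqj kj ki).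
  by rewrite Cki Ckj !mul0r addr0.
have := terminates_weighted_sum_ge J0 (fun l => ltW (u_gt0 l)) term.
by rewrite !sum2; have := u_gt0 i; have := u_gt0 j; nra.
Qed.

Lemma fire_local_confluence (v : 'I_n -> R) i j :
  i != j -> v i < -1 -> v j < -1 -> terminates v ->
  exists p q, [/\ legal_seq C v (i :: p), legal_seq C v (j :: q),
                  size p = size q & run C v (i :: p) = run C v (j :: q)].
Proof.
move=> ij vi vj term.
have ab_lt4 : (`|C i j| * `|C j i| < 4)%N.
  rewrite ltn_neqAle cartan_pair_le4 // andbT.
  by apply/eqP => ab4; exact: affine_pair_not_terminates ij ab4 vi vj term.
have [m [Li Lj E]] := legal_braid vi vj ab_lt4.
by exists (alt j i m), (alt i j m); rewrite !size_alt.
Qed.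

End NullVector.
End Cartan.
End Firing.

Theorem corollary3p5 (R : realType) (n : nat) (C : 'M[int]_n)
    (hC : extended_dynkin R C) (v : 'I_n -> R) (s1 s2 : seq 'I_n) :
  legal_seq C v s1 -> terminal (run C v s1) ->
  legal_seq C v s2 -> terminal (run C v s2) ->
  size s1 = size s2 /\ run C v s1 = run C v s2.
Proof.
move=> L1 T1 L2 T2; have [hG _ [u [u_gt0 Cu0]]] := hC.
have local_confluence := fire_local_confluence hG u_gt0 Cu0.
by have [_ /(_ T2) [-> ->]] := legal_seq_terminal_unique local_confluence L1 T1 L2.
Qed.
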